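(* Let $\varepsilon>0$, $u_0\in\mathcal V_{[0,1]}\setminus\{\mathbf 0,\mathbf 1\}$, and let $\tau_n\downarrow0$ with $\tau_n<\varepsilon$ be such that for every $t\ge0$ the limit $\hat u(t):=\lim_{n\to\infty}u^{[\tau_n]}_{\lceil t/\tau_n\rceil}$ exists and $\hat u$ is (together with some $\gamma$) a solution of mass-conserving double-obstacle AC flow on $[0,\infty)$ with $\hat u(0)=u_0$. Then $\hat u\in C^{0,1}([0,\infty);\mathcal V)$, i.e. $\hat u$ is Lipschitz continuous on $[0,\infty)$.
   Context: $G=(V,E)$ is a finite, simple, connected, undirected graph with weights $\omega_{ij}=\omega_{ji}>0$ for $ij\in E$, $\omega_{ij}=0$ otherwise; $d_i=\sum_j\omega_{ij}$, $r\in[0,1]$ fixed. $\mathcal V$ = functions $V\to\mathbb R$ with $\langle u,v\rangle_{\mathcal V}=\sum_i u_iv_id_i^r$ and norm $\|\cdot\|_{\mathcal V}$; $\mathcal V_{[0,1]}$ = functions $V\to[0,1]$. $(\Delta u)_i=d_i^{-r}\sum_j\omega_{ij}(u_i-u_j)$, $e^{-\tau\Delta}$ its matrix exponential. $\mathbf 1$ all-ones, $\mathbf 0$ zero function; $\mathcal M(u)=\langle u,\mathbf 1\rangle_{\mathcal V}$; $\bar v=\mathcal M(v)/\mathcal M(\mathbf 1)$. For $u\in\mathcal V_{[0,1]}$, $\mathcal B(u)$ = set of $\beta\in\mathcal V$ with $\beta_i\ge0$ if $u_i=0$, $\beta_i=0$ if $0<u_i<1$, $\beta_i\le0$ if $u_i=1$.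 Semi-discrete iterates with time step $\tau$, $\lambda=\tau/\varepsilon$ and initial state $u_0$: $u^{[\tau]}_0=u_0$ and for $m\ge0$, some $\beta^{[\tau]}_{m+1}\in\mathcal B(u^{[\tau]}_{m+1})$ with $u^{[\tau]}_{m+1} -e^{-\tau\Delta}u^{[\tau]}_m-\lambda u^{[\tau]}_{m+1}+\lambda\overline{u^{[\tau]}_{m+1}}\mathbf{1} =\lambda\beta^{[\tau]}_{m+1} -\lambda\overline{\beta^{[\tau]}_{m+1}}\mathbf{1}$. A pair $(u,\beta)$ is a solution to mass-conserving double-obstacle AC flow on $[0,\infty)$ if $u\in H^1_{loc}\cap C^0$, $u(t)\in\mathcal V_{[0,1]}$, and for a.e. $t$: $\varepsilon \frac{du}{dt} + \varepsilon\Delta u-u+\bar u\mathbf{1} = \beta - \bar\beta\mathbf{1}$, $\beta(t)\in\mathcal B(u(t))$. *)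

From HB Require Import structures.
From mathcomp Require Import all_boot all_order all_algebra.
From mathcomp Require Import all_classical all_reals all_analysis.
Set Implicit Arguments. Unset Strict Implicit. Unset Printing Implicit Defensive.
Import Order.TTheory GRing.Theory Num.Theory.
Import numFieldNormedType.Exports.
Local Open Scope classical_set_scope.
Local Open Scope ring_scope.

Section Graph.
Variables (R : realType) (V : finType) (w : V -> V -> R) (r : R).

Definition edge_rel : rel V := fun i j => 0 < w i j.
Definition is_weighted_graph : Prop :=
  [/\ forall i j, w i j = w j i,
      forall i j, 0 <= w i j,
      forall i, w i i = 0 &
      forall i j, connect edge_rel i j].

Definition deg (i : V) : R := \sum_(j : V) w i j.

Definition innerV (u v : V -> R) : R := \sum_(i : V) u i * v i * (deg i `^ r).
Definition normV (u : V -> R) : R := Num.sqrt (innerV u u).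

Definition massV (u : V -> R) : R := innerV u (fun _ => 1).
Definition avgV (u : V -> R) : R := massV u / massV (fun _ => 1).

Definition Lap (u : V -> R) : V -> R :=
  fun i => (deg i `^ r)^-1 * \sum_(j : V) w i j * (u i - u j).

Definition expLap (tau : R) (u : V -> R) : V -> R :=
  fun i => limn (series (fun k : nat => (- tau) ^+ k / (k`!)%:R * iter k Lap u i)).

Definition in01 (u : V -> R) : Prop := forall i, 0 <= u i <= 1.

Definition inB (u beta : V -> R) : Prop :=
  forall i, (u i = 0 -> 0 <= beta i) /\ (0 < u i < 1 -> beta i = 0)
            /\ (u i = 1 -> beta i <= 0).

(* one step of the semi-discrete scheme: u' = u^{[tau]}_{m+1}, u = u^{[tau]}_m *)
Definition sd_step (eps tau : R) (u u' : V -> R) : Prop :=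
  in01 u' /\ exists beta, inB u' beta /\
    forall i, u' i - expLap tau u i - (tau / eps) * u' i + (tau / eps) * avgV u'
              = (tau / eps) * beta i - (tau / eps) * avgV beta.

Definition sd_iterates (eps tau : R) (u0 : V -> R) (um : nat -> V -> R) : Prop :=
  um 0%N = u0 /\ forall m, sd_step eps tau (um m) (um m.+1).

(* (u, beta) solves the mass-conserving double-obstacle AC flow on [0, oo).
   H^1_loc: each coordinate is the integral of a locally L^2 function g
   (its weak derivative); the equation holds a.e. with du/dt = g. *)
Definition AC_solution (eps : R) (u beta : R -> V -> R) : Prop :=
  (forall i, {within `[0, +oo[, continuous (fun t => u t i)}) /\
  (forall t, 0 <= t -> in01 (u t)) /\
  exists g : R -> V -> R,
    (forall i T, 0 <= T ->
       (@lebesgue_measure R).-integrable `[0, T] (fun s => (g s i)%:E) /\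
       (@lebesgue_measure R).-integrable `[0, T] (fun s => ((g s i) ^+ 2)%:E)) /\
    (forall i t, 0 <= t ->
       u t i = u 0 i + Rintegral (@lebesgue_measure R) `[0, t] (fun s => g s i)) /\
    {ae @lebesgue_measure R, forall t, 0 <= t ->
       inB (u t) (beta t) /\
       forall i, eps * g t i + eps * Lap (u t) i - u t i + avgV (u t)
                 = beta t i - avgV (beta t)}.

End Graph.

(* Let g be the weak time derivative of a solution u.  At almost every t > 0
   each primitive of g_i is differentiable with derivative g_i(t), and a
   coordinate touching the obstacle 0 or 1 is extremal there, so g_i(t) = 0 on
   the contact set.  On the contact set the flow equation then expresses
   beta_i - avg beta through u alone, while beta_i = 0 on the free set; the
   weighted mass identity sum_i d_i^r (beta_i - avg beta) = 0 therefore bounds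
   avg beta, and hence g, by a constant depending only on the graph and eps. *)

From HB Require Import structures.
From mathcomp Require Import all_boot all_order all_algebra.
From mathcomp Require Import all_classical all_reals all_analysis.
From mathcomp Require Import ring lra measurable_realfun.
Set Implicit Arguments. Unset Strict Implicit. Unset Printing Implicit Defensive.
Import Order.TTheory GRing.Theory Num.Theory.
Import numFieldNormedType.Exports.
Local Open Scope classical_set_scope.
Local Open Scope ring_scope.

Lemma not_interior01 (R : realDomainType) (x : R) :
  0 <= x <= 1 -> ~~ (0 < x < 1) -> x = 0 \/ x = 1.
Proof.
move=> /andP[x0 x1]; rewrite negb_and -!leNgt => /orP[x_le0|x_ge1].
  by left; apply/eqP; rewrite eq_le x_le0 x0.
by right; apply/eqP; rewrite eq_le x1 x_ge1.
Qed.

Section WeightedGraph.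
Variables (R : realType) (V : finType) (w : V -> V -> R) (r : R).
Hypothesis graph_w : is_weighted_graph w.

Let w_ge0 : forall i j, 0 <= w i j. Proof. by case: graph_w. Qed.

Definition degr (i : V) : R := deg w i `^ r.

Definition total_degr : R := \sum_i degr i.

Lemma degr_ge0 i : 0 <= degr i. Proof. exact: powR_ge0. Qed.

Lemma invr_degr_ge0 i : 0 <= (degr i)^-1. Proof. by rewrite invr_ge0 degr_ge0. Qed.

Lemma total_degr_ge0 : 0 <= total_degr.
Proof. by apply: sumr_ge0 => i _; exact: degr_ge0. Qed.

Lemma deg_ge0 i : 0 <= deg w i.
Proof. by apply: sumr_ge0 => j _. Qed.

Lemma massV1 : massV w r (fun _ => 1) = total_degr.
Proof. by apply: eq_bigr => i _; rewrite !mul1r. Qed.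

Lemma normV_le (u : V -> R) (C : R) : 0 <= C -> (forall i, `|u i| <= C) ->
  normV w r u <= C * Num.sqrt total_degr.
Proof.
move=> C0 uC; rewrite -[C]ger0_norm // -sqrtr_sqr -sqrtrM ?sqr_ge0 //.
rewrite ler_sqrt; last by apply: mulr_ge0; [exact: sqr_ge0|exact: total_degr_ge0].
rewrite mulr_sumr; apply: ler_sum => i _.
rewrite -/(degr i) ler_wpM2r ?degr_ge0 // -expr2 -real_normK ?num_real //.
by rewrite ler_sqr.
Qed.

Lemma norm_Lap_le (u : V -> R) i : in01 u ->
  `|Lap w r u i| <= (degr i)^-1 * deg w i.
Proof.
move=> u01; rewrite /Lap normrM ger0_norm ?invr_degr_ge0 //.
apply: ler_wpM2l; first exact: invr_degr_ge0.
apply: le_trans (ler_norm_sum _ _ _) _; apply: ler_sum => j _.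
rewrite normrM ger0_norm // ler_piMr // ler_norml.
by have /andP[? ?] := u01 i; have /andP[? ?] := u01 j; apply/andP; split; lra.
Qed.

Lemma norm_avgV_le1 (u : V -> R) : in01 u -> `|avgV w r u| <= 1.
Proof.
move=> u01; rewrite /avgV massV1.
have [->|S0] := eqVneq total_degr 0; first by rewrite invr0 mulr0 normr0.
have Sgt0 : 0 < total_degr by rewrite lt_def S0 total_degr_ge0.
have mass_ge0 : 0 <= massV w r u.
  apply: sumr_ge0 => i _; rewrite mulr1 mulr_ge0 ?degr_ge0 //.
  by have /andP[] := u01 i.
have mass_le : massV w r u <= total_degr.
  apply: ler_sum => i _; rewrite mulr1 ler_piMl ?degr_ge0 //.
  by have /andP[] := u01 i.
by rewrite ger0_norm ?divr_ge0 ?(ltW Sgt0) // ler_pdivrMr // mul1r.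
Qed.

Lemma sum_degr_centered (beta : V -> R) :
  \sum_i degr i * (beta i - avgV w r beta) = 0.
Proof.
have [S0|S0] := eqVneq total_degr 0.
  have /eqP := S0; rewrite psumr_eq0 => [/allP degr0|i _]; last exact: degr_ge0.
  by apply: big1 => i _; rewrite (eqP (degr0 i (mem_index_enum i))) mul0r.
under eq_bigr do rewrite mulrBr.
rewrite sumrB -mulr_suml /avgV massV1 -/total_degr mulrC divfK //.
by apply/eqP; rewrite subr_eq0; apply/eqP/eq_bigr => i _; rewrite mulr1 mulrC.
Qed.

Lemma degr_eq0_avgV (beta : V -> R) k : degr k = 0 -> avgV w r beta = 0.
Proof.
case: graph_w => _ _ _ conn degrk.
have degk : deg w k = 0.
  apply/eqP; apply: contraPT degrk => /negPf degk.
  by rewrite /degr /powR degk => /eqP; rewrite gt_eqF ?expR_gt0.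
have wk j : w k j = 0.
  by move: degk => /eqP; rewrite psumr_eq0 // => /allP /(_ j (mem_index_enum j)) /eqP.
have eqk j : j = k.
  have /connectP [[_ ->|x p /= /andP[kx _] _]] // := conn k j.
  by move: kx; rewrite /edge_rel wk ltxx.
rewrite /avgV (_ : massV w r beta = 0) ?mul0r //.
by apply: big1 => j _; rewrite (eqk j) -/(degr k) degrk mulr0.
Qed.

Definition drift_bound (eps : R) : R :=
  eps * \sum_i (degr i)^-1 * deg w i + 2.

Definition velocity_bound (eps : R) : R :=
  drift_bound eps * (1 + total_degr * \sum_i (degr i)^-1) / eps.

Lemma drift_bound_ge0 eps : 0 <= eps -> 0 <= drift_bound eps.
Proof.
move=> eps0; apply: addr_ge0 => //; apply: mulr_ge0 => //.
by apply: sumr_ge0 => i _; rewrite mulr_ge0 ?invr_degr_ge0 ?deg_ge0.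
Qed.

Lemma velocity_bound_ge0 eps : 0 < eps -> 0 <= velocity_bound eps.
Proof.
move=> eps0; apply: divr_ge0 (ltW eps0); apply: mulr_ge0.
  exact/drift_bound_ge0/ltW.
apply: addr_ge0 => //; apply: mulr_ge0; first exact: total_degr_ge0.
by apply: sumr_ge0 => i _; exact: invr_degr_ge0.
Qed.

Lemma norm_drift_le eps (u : V -> R) i : 0 <= eps -> in01 u ->
  `|eps * Lap w r u i - u i + avgV w r u| <= drift_bound eps.
Proof.
move=> eps0 u01; have Lap_le : `|Lap w r u i| <= \sum_j (degr j)^-1 * deg w j.
  apply: le_trans (norm_Lap_le i u01) _.
  rewrite (bigD1 i) //= lerDl; apply: sumr_ge0 => j _.
  by rewrite mulr_ge0 ?invr_degr_ge0 ?deg_ge0.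
have epsLap_le : `|eps * Lap w r u i| <= eps * \sum_j (degr j)^-1 * deg w j.
  by rewrite normrM ger0_norm // ler_wpM2l.
move: epsLap_le (norm_avgV_le1 u01) (u01 i); rewrite /drift_bound !ler_norml.
by move=> /andP[? ?] /andP[? ?] /andP[? ?]; apply/andP; split; lra.
Qed.

Section FlowEquation.
Variables (eps : R) (u beta g : V -> R).
Hypothesis eps_gt0 : 0 < eps.
Hypotheses (u01 : in01 u) (beta_B : inB u beta).
Hypothesis flow_eq : forall i,
  eps * g i + eps * Lap w r u i - u i + avgV w r u = beta i - avgV w r beta.
Hypothesis g_contact : forall i, u i = 0 \/ u i = 1 -> g i = 0.

Let drift i := eps * Lap w r u i - u i + avgV w r u.
Let interior i := 0 < u i < 1.

Let drift_le i : `|drift i| <= drift_bound eps.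
Proof. exact: norm_drift_le (ltW eps_gt0) u01. Qed.

Lemma contact_beta i : ~~ interior i -> beta i - avgV w r beta = drift i.
Proof.
move=> /(not_interior01 (u01 i)) /g_contact g0.
by rewrite -flow_eq g0 mulr0 add0r /drift.
Qed.

Lemma interior_velocity k : interior k -> eps * g k = - avgV w r beta - drift k.
Proof.
move=> int_k; have := flow_eq k; rewrite /drift ((beta_B k).2.1 int_k) => flow_k.
lra.
Qed.

Lemma avgV_balance : avgV w r beta * \sum_(i | interior i) degr i
  = \sum_(i | ~~ interior i) degr i * drift i.
Proof.
have := sum_degr_centered beta; rewrite (bigID interior) /=.
under eq_bigr => i int_i do rewrite ((beta_B i).2.1 int_i) sub0r mulrN.
under [X in _ + X = _]eq_bigr => i /contact_beta -> do [].
by rewrite sumrN -mulr_suml mulrC => /eqP; rewrite addrC subr_eq0 => /eqP ->.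
Qed.

Lemma norm_avgV_beta_le k : interior k ->
  `|avgV w r beta| <= drift_bound eps * total_degr * \sum_i (degr i)^-1.
Proof.
move=> int_k; have K0 := drift_bound_ge0 (ltW eps_gt0).
have bound_ge0 : 0 <= drift_bound eps * total_degr * \sum_i (degr i)^-1.
  rewrite !mulr_ge0 ?total_degr_ge0 //.
  by apply: sumr_ge0 => i _; exact: invr_degr_ge0.
have [degrk0|degrk_neq0] := eqVneq (degr k) 0.
  by rewrite (degr_eq0_avgV _ degrk0) normr0.
have degrk_gt0 : 0 < degr k by rewrite lt_def degrk_neq0 degr_ge0.
have sum_int_ge : degr k <= \sum_(i | interior i) degr i.
  by rewrite (bigD1 k) //= lerDl; apply: sumr_ge0 => i _; exact: degr_ge0.
have sum_contact_le :
    `|\sum_(i | ~~ interior i) degr i * drift i| <= drift_bound eps * total_degr.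
  apply: le_trans (ler_norm_sum _ _ _) _.
  apply: (@le_trans _ _ (\sum_(i | ~~ interior i) degr i * drift_bound eps)).
    apply: ler_sum => i _; rewrite normrM ger0_norm ?degr_ge0 //.
    by rewrite ler_wpM2l ?degr_ge0.
  rewrite -mulr_suml mulrC ler_wpM2l // /total_degr [leRHS](bigID interior) /=.
  by rewrite lerDr; apply: sumr_ge0 => i _; exact: degr_ge0.
have avg_le : `|avgV w r beta| * degr k <= drift_bound eps * total_degr.
  apply: le_trans sum_contact_le; rewrite -avgV_balance [leRHS]normrM.
  by rewrite ler_wpM2l // (le_trans sum_int_ge) ?ler_norm.
rewrite -ler_pdivlMr // in avg_le; apply: le_trans avg_le _.
rewrite ler_wpM2l ?mulr_ge0 ?total_degr_ge0 // (bigD1 k) //= lerDl.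
by apply: sumr_ge0 => i _; exact: invr_degr_ge0.
Qed.

Lemma norm_velocity_le k : `|g k| <= velocity_bound eps.
Proof.
have [int_k|/(not_interior01 (u01 k)) /g_contact ->] := boolP (interior k); last first.
  by rewrite normr0 velocity_bound_ge0.
rewrite /velocity_bound ler_pdivlMr // mulrC -(gtr0_norm eps_gt0) -normrM.
rewrite interior_velocity // -opprD normrN (gtr0_norm eps_gt0).
apply: le_trans (ler_normD _ _) _.
rewrite mulrDr mulr1 addrC mulrA lerD ?drift_le //.
exact: norm_avgV_beta_le int_k.
Qed.

End FlowEquation.

End WeightedGraph.

Lemma derive1_at_local_max (R : realType) (f : R -> R) c :
  derivable f c 1 -> (\forall y \near c, f y <= f c) -> derive1 f c = 0.
Proof.
move=> df /nbhs0P fmax.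
pose q h := h^-1 *: ((f \o shift c) (h *: 1) - f c).
have q_right : q @ 0^'+ --> derive1 f c.
  rewrite derive1E; apply: cvg_trans (cvg_app q (within_subset _ _)) df.
  by move=> h /lt0r_neq0.
have q_left : q @ 0^'- --> derive1 f c.
  rewrite derive1E; apply: cvg_trans (cvg_app q (within_subset _ _)) df.
  by move=> h /ltr0_neq0.
apply/eqP; rewrite eq_le; apply/andP; split.
- apply: (cvgr_to_le q_right); near=> h.
  have h_gt0 : 0 < h by near: h; exact: nbhs_right_gt.
  rewrite /q /= [_%:A]mulr1 -[_ *: _]/(_ * _) pmulr_rle0 ?invr_gt0 // subr_le0 addrC.
  by near: h; apply: cvg_within.
- apply: (cvgr_to_ge q_left); near=> h.
  have h_lt0 : h < 0 by near: h; exact: nbhs_left_lt.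
  rewrite /q /= [_%:A]mulr1 -[_ *: _]/(_ * _) nmulr_rge0 ?invr_lt0 // subr_le0 addrC.
  by near: h; apply: cvg_within.
Unshelve. all: by end_near. Qed.

Lemma derive1_at_local_min (R : realType) (f : R -> R) c :
  derivable f c 1 -> (\forall y \near c, f c <= f y) -> derive1 f c = 0.
Proof.
move=> df fmin; have : derive1 (- f) c = 0.
  apply: derive1_at_local_max; first exact: derivableN.
  by apply: filterS fmin => y; rewrite lerN2.
by rewrite derive1E deriveN // -derive1E => /eqP; rewrite oppr_eq0 => /eqP.
Qed.

Lemma derive1_eq0_at_obstacle (R : realType) (f : R -> R) (a b c : R) :
  derivable f c 1 -> (\forall y \near c, a <= f y <= b) ->
  f c = a \/ f c = b -> derive1 f c = 0.
Proof.
move=> df fab [fca|fcb].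
- by apply: derive1_at_local_min df _; apply: filterS fab => y /andP[]; rewrite fca.
- by apply: derive1_at_local_max df _; apply: filterS fab => y /andP[_]; rewrite fcb.
Qed.

Section Primitive.
Variable R : realType.
Local Notation mu := (@lebesgue_measure R).

Definition primitive0 (g : R -> R) (t : R) : R := Rintegral mu `[0, t] g.

Lemma primitive0_derivable_ae (g : R -> R) :
  (forall T, 0 <= T -> mu.-integrable `[0, T] (EFin \o g)) ->
  {ae mu, forall t, 0 < t ->
    derivable (primitive0 g) t 1 /\ derive1 (primitive0 g) t = g t}.
Proof.
move=> g_int; pose gn (n : nat) := g \_ `[0, n%:R].
have gn_int n : mu.-integrable setT (EFin \o gn n).
  by rewrite /gn -restrict_EFin; apply/(integrable_mkcond _ _).1 => //; exact: g_int.
have gn_int_itv n y : mu.-integrable `[0, y] (EFin \o gn n).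
  exact: integrableS (gn_int n).
(* FTC1 needs integrability on the whole line, hence the truncations to [0, n]. *)
have FTC_gn n := FTC1 (gn_int_itv n) (open_integrable_locally openT (gn_int n)).
have := ae_foralln FTC_gn; apply: filterS => t FTC_t t_gt0.
set n := (Num.truncn t).+1; have t_lt_n : t < n%:R by exact: truncnS_gt.
have [dF dFe] := FTC_t n (ltac:(by rewrite lte_fin)).
have near_eq : \forall y \near t,
    Rintegral mu `[0, y] (gn n) = primitive0 g y.
  near=> y; apply: eq_Rintegral => s; rewrite inE /= in_itv /= => /andP[s0 sy].
  rewrite mem_set //= in_itv /= s0 (le_trans sy) //.
  by near: y; exact: lt_le_nbhsl.
split; first exact: near_eq_derivable near_eq dF.
rewrite derive1E -(near_eq_derive _ near_eq) -derive1E dFe /gn patchE mem_set //=.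
by rewrite in_itv /= (ltW t_gt0) (ltW t_lt_n).
Unshelve. all: by end_near. Qed.

Lemma primitive0_lipschitz (g : R -> R) (G : R) : 0 <= G ->
  (forall T, 0 <= T -> mu.-integrable `[0, T] (EFin \o g)) ->
  {ae mu, forall t, 0 <= t -> `|g t| <= G} ->
  forall s t, 0 <= s -> s <= t -> `|primitive0 g t - primitive0 g s| <= G * (t - s).
Proof.
move=> G0 g_int g_le s t s0 st; have t0 := le_trans s0 st.
have int_st : mu.-integrable `]s, t] (EFin \o g).
  by apply: integrableS (g_int t t0) => //; apply: subset_itvr; rewrite bnd_simp.
rewrite /primitive0 (Rintegral_itvB (g_int t t0)) ?bnd_simp //.
apply: le_trans (le_normr_Rintegral _ int_st) _; first exact: measurable_itv.
have g_meas : measurable_fun `]s, t] (fun x : R => (`|g x|)%:E).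
  case/integrableP: int_st => /measurable_EFinP g_meas _.
  by apply/measurable_EFinP; exact: measurableT_comp.
have abs_int_le : (\int[mu]_(x in `]s, t]) (`|g x|)%:E <= (G * (t - s))%:E)%E.
  apply: (@le_trans _ _ (\int[mu]_(x in `]s, t]) (cst G%:E) x)%E).
    apply: ae_ge0_le_integral => //.
    apply: (filterS _ g_le); first exact: (ae_filter_ringOfSetsType mu).
    move=> x g_le_x; rewrite /= in_itv /= => /andP[sx _].
    by rewrite lee_fin g_le_x // (le_trans s0 (ltW sx)).
  rewrite integral_cst // [X in (_ * X)%E]lebesgue_measure_itv /= lte_fin.
  have [s_lt_t|] := ltP s t; first by rewrite -EFinD -EFinM.
  move=> t_le_s; have -> : t = s by apply/eqP; rewrite eq_le t_le_s st.
  by rewrite subrr mulr0 mule0.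
rewrite /Rintegral -lee_fin fineK // ge0_fin_numE ?(le_lt_trans abs_int_le) ?ltry //.
by apply: integral_ge0 => x _; rewrite lee_fin.
Qed.

Lemma obstacle_derivative_ae (v g : R -> R) :
  (forall T, 0 <= T -> mu.-integrable `[0, T] (EFin \o g)) ->
  (forall t, 0 <= t -> 0 <= v t <= 1) ->
  (forall t, 0 <= t -> v t = v 0 + primitive0 g t) ->
  {ae mu, forall t, 0 < t -> v t = 0 \/ v t = 1 -> g t = 0}.
Proof.
move=> g_int v01 v_eq; have := primitive0_derivable_ae g_int.
apply: filterS; first exact: (ae_filter_ringOfSetsType mu).
move=> t dP t_gt0 v_contact; have [dPt <-] := dP t_gt0.
have P_eq y : 0 <= y -> primitive0 g y = v y - v 0 by move=> /v_eq ->; ring.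
apply: (derive1_eq0_at_obstacle (a := - v 0) (b := 1 - v 0) dPt).
  apply: filterS (lt_le_nbhsr t_gt0) => y y_ge0.
  by rewrite P_eq //; have /andP[? ?] := v01 y y_ge0; apply/andP; split; lra.
by rewrite P_eq ?(ltW t_gt0) //; case: v_contact => ->; [left|right]; ring.
Qed.

End Primitive.

Lemma AC_solution_lipschitz (R : realType) (V : finType) (w : V -> V -> R)
    (r eps : R) (u beta : R -> V -> R) :
  is_weighted_graph w -> 0 < eps -> AC_solution w r eps u beta ->
  exists L, forall s t, 0 <= s -> 0 <= t ->
    normV w r (u t - u s) <= L * `|t - s|.
Proof.
move=> graph_w eps_gt0 [_ [u01 [g [g_int [u_eq flow]]]]].
have ae_filter := ae_filter_ringOfSetsType (@lebesgue_measure R).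
set G := velocity_bound w r eps; have G_ge0 : 0 <= G.
  by apply: velocity_bound_ge0 => //; case: graph_w.
have contact i := obstacle_derivative_ae (fun T T0 => (g_int i T T0).1)
  (fun t t0 => u01 t t0 i) (u_eq i).
have ae_neq0 : {ae @lebesgue_measure R, forall t, t != 0}.
  exists [set 0]; split => //; first exact: lebesgue_measure_set1.
  by move=> t /= /negP; rewrite negbK => /eqP ->.
have g_bound : {ae @lebesgue_measure R, forall t, 0 <= t -> forall i, `|g t i| <= G}.
  apply: filterS (filterI (filter_forall ae_filter contact) (filterI flow ae_neq0)).
  move=> t [g_contact [flow_t t_neq0]] t_ge0.
  have t_gt0 : 0 < t by rewrite lt_def t_neq0 t_ge0.
  have [beta_B flow_eq] := flow_t t_ge0.
  move=> i; apply: (norm_velocity_le graph_w eps_gt0 (u01 t t_ge0) beta_B flow_eq).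
  by move=> j; exact: g_contact j t_gt0.
have coord_lip i s t : 0 <= s -> s <= t -> `|u t i - u s i| <= G * `|t - s|.
  move=> s0 st; rewrite (u_eq i t (le_trans s0 st)) (u_eq i s s0) opprD addrACA.
  rewrite subrr add0r [`|t - s|]ger0_norm ?subr_ge0 //.
  apply: primitive0_lipschitz => // [T T0|]; first exact: (g_int i T T0).1.
  by apply: filterS g_bound => x + x0; apply.
exists (G * Num.sqrt (total_degr w r)) => s t s0 t0.
rewrite mulrAC; apply: normV_le => [|i]; first exact: mulr_ge0.
change (`|u t i - u s i| <= G * `|t - s|).
have [st|/ltW ts] := leP s t; first exact: coord_lip.
by rewrite distrC [`|t - s|]distrC; exact: coord_lip.
Qed.

Theorem theorem47 (R : realType) (V : finType) (w : V -> V -> R) (r : R)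
  (eps : R) (u0 : V -> R) (tau : nat -> R) (useq : nat -> nat -> V -> R)
  (uhat : R -> V -> R) :
  is_weighted_graph w -> 0 <= r <= 1 ->
  0 < eps ->
  in01 u0 -> u0 <> (fun _ => 0) -> u0 <> (fun _ => 1) ->
  (forall n, 0 < tau n < eps) ->
  (forall n, tau n.+1 <= tau n) ->
  tau @ \oo --> 0 ->
  (forall n, sd_iterates w r eps (tau n) u0 (useq n)) ->
  (forall t i, 0 <= t ->
     (fun n => useq n `|Num.ceil (t / tau n)|%N i) @ \oo --> uhat t i) ->
  (exists gamma, AC_solution w r eps uhat gamma) ->
  uhat 0 = u0 ->
  exists L : R, forall s t, 0 <= s -> 0 <= t ->
    normV w r (uhat t - uhat s) <= L * `|t - s|.
Proof.
move=> graph_w _ eps_gt0 _ _ _ _ _ _ _ _ [beta sol] _.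
exact: AC_solution_lipschitz graph_w eps_gt0 sol.
Qed.
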